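(* Let $\kappa=0$ and $c=\cos\alpha\ge 0$. Then for every $g\in SO(3)$ there is an optimal decomposition of $g$ which is a subword of one of the following patterns, or of an image of one of them under the group $(X,Y)\mapsto(\pm X,\pm Y)$: (IX) $R(\pi Y)\,R(tW_+)\,R(\pi Y)$ with $t\ge0$; (X) $R(\pi Y)\,R(tW_+)\,R(-\pi Y)$ with $t\ge 0$. (Here $W_+=W_-=X-cY$.)
   Context: Fix unit vectors $X,Y\in\mathbb R^3$ with angle $\alpha\in(0,\pi/2]$, $c=\cos\alpha$, and $\kappa\in[0,1]$. For a unit vector $v$, $R(tv)\in SO(3)$ is rotation by angle $t$ about $v$ (counterclockwise viewed from the tip): $R(tv)=\cos t\,I+\sin t\,[v]_\times+(1-\cos t)vv^T$; for nonzero non-unit $v$, $R(tv):=R((t|v|)\,v/|v|)$. For nonzero $C=aX+bY$, $\mathrm{cost}(C)=|a|+\kappa|b|$. A decomposition of $g\in SO(3)$ is a finite product $g=R(\tau_1C_1)\cdots R(\tau_nC_n)$ with $\tau_j\ge0$, $C_j$ nonzero in $\mathrm{span}\{X,Y\}$ (a factor $R(-\tau C)$, $\tau\ge0$, means $R(\tau(-C))$), with cost $\sum\tau_j\mathrm{cost}(C_j)$. Problem 1: minimize the cost over all decompositions of $g$; a decomposition is optimal if its cost equals the infimum. $W_+=(1+\kappa c)X-(\kappa+c)Y$, $W_-=(1-\kappa c)X+(\kappa-c)Y$. Subword: for a word $R(\tau_1C_1)\cdots R(\tau_nC_n)$ ($\tau_j\ge0$), a subword is $R(\tau_k'C_k)R(\tau_{k+1}C_{k+1})\cdots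 R(\tau_{m-1}C_{m-1})R(\tau_m'C_m)$ with $1\le k\le m\le n$, $0\le\tau_k'\le\tau_k$, $0\le\tau_m'\le\tau_m$. Symmetries: with labels $\pm X,\pm Y,\pm W_\pm$, let $\nu:C\mapsto-C$ and $\rho:X\mapsto X,\ Y\mapsto-Y,\ W_+\mapsto W_-,\ W_-\mapsto W_+$ (extended by $\rho(-C)=-\rho(C)$); applying them replaces each label by its image and keeps the times. ''Under $(X,Y)\mapsto(\pm X,\pm Y)$'' means images under the group $\{\mathrm{id},\nu,\rho,\nu\rho\}$. *)

From Stdlib Require Import Reals List.
Import ListNotations.
Open Scope R_scope.

Record vec := mkVec { v1 : R; v2 : R; v3 : R }.

Record mat := mkMat {
  m11 : R; m12 : R; m13 : R;
  m21 : R; m22 : R; m23 : R;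
  m31 : R; m32 : R; m33 : R }.

Definition vadd (u v : vec) : vec := mkVec (v1 u + v1 v) (v2 u + v2 v) (v3 u + v3 v).
Definition vscale (k : R) (v : vec) : vec := mkVec (k * v1 v) (k * v2 v) (k * v3 v).
Definition vzero : vec := mkVec 0 0 0.
Definition dot (u v : vec) : R := v1 u * v1 v + v2 u * v2 v + v3 u * v3 v.
Definition vnorm (v : vec) : R := sqrt (dot v v).

Definition mat_id : mat := mkMat 1 0 0 0 1 0 0 0 1.

Definition mat_mul (A B : mat) : mat :=
  mkMat
    (m11 A * m11 B + m12 A * m21 B + m13 A * m31 B)
    (m11 A * m12 B + m12 A * m22 B + m13 A * m32 B)
    (m11 A * m13 B + m12 A * m23 B + m13 A * m33 B)
    (m21 A * m11 B + m22 A * m21 B + m23 A * m31 B)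
    (m21 A * m12 B + m22 A * m22 B + m23 A * m32 B)
    (m21 A * m13 B + m22 A * m23 B + m23 A * m33 B)
    (m31 A * m11 B + m32 A * m21 B + m33 A * m31 B)
    (m31 A * m12 B + m32 A * m22 B + m33 A * m32 B)
    (m31 A * m13 B + m32 A * m23 B + m33 A * m33 B).

Definition transp (A : mat) : mat :=
  mkMat (m11 A) (m21 A) (m31 A) (m12 A) (m22 A) (m32 A) (m13 A) (m23 A) (m33 A).

Definition det (A : mat) : R :=
  m11 A * (m22 A * m33 A - m23 A * m32 A)
  - m12 A * (m21 A * m33 A - m23 A * m31 A)
  + m13 A * (m21 A * m32 A - m22 A * m31 A).

Definition in_SO3 (g : mat) : Prop := mat_mul (transp g) g = mat_id /\ det g = 1.

(** R(t u) for a unit vector u: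
    cos t I + sin t [u]_x + (1 - cos t) u u^T. *)
Definition rot_unit (t : R) (u : vec) : mat :=
  let c := cos t in let s := sin t in let d := 1 - cos t in
  let x := v1 u in let y := v2 u in let z := v3 u in
  mkMat
    (c + d * x * x)      (- s * z + d * x * y) (s * y + d * x * z)
    (s * z + d * y * x)  (c + d * y * y)       (- s * x + d * y * z)
    (- s * y + d * z * x) (s * x + d * z * y)  (c + d * z * z).

Definition rot (t : R) (v : vec) : mat :=
  rot_unit (t * vnorm v) (vscale (/ vnorm v) v).

(** A letter (tau, (a, b)) stands for the factor R(tau C) with C = aX + bY. *)
Definition letter := (R * (R * R))%type.
Definition word := list letter.

Definition lin (X Y : vec) (a b : R) : vec := vadd (vscale a X) (vscale b Y).

Definition eval_word (X Y : vec) (w : word) : mat :=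
  fold_right (fun l M => mat_mul (rot (fst l) (lin X Y (fst (snd l)) (snd (snd l)))) M)
    mat_id w.

Definition cost_word (kappa : R) (w : word) : R :=
  fold_right (fun l s => fst l * (Rabs (fst (snd l)) + kappa * Rabs (snd (snd l))) + s) 0 w.

Definition is_decomposition (X Y : vec) (g : mat) (w : word) : Prop :=
  (forall l, In l w -> 0 <= fst l /\ lin X Y (fst (snd l)) (snd (snd l)) <> vzero)
  /\ eval_word X Y w = g.

Definition optimal (kappa : R) (X Y : vec) (g : mat) (w : word) : Prop :=
  is_decomposition X Y g w /\
  forall w', is_decomposition X Y g w' -> cost_word kappa w <= cost_word kappa w'.

(** Subwords R(tau_k' C_k) R(tau_{k+1} C_{k+1}) ... R(tau_{m-1} C_{m-1}) R(tau_m' C_m);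
    for k = m this is the single factor R(tau' C_k), 0 <= tau' <= tau_k. *)
Definition subword {A : Type} (s w : list (R * A)) : Prop :=
  (exists l1 l2 t C t',
      w = l1 ++ (t, C) :: l2 /\ 0 <= t' <= t /\ s = [(t', C)]) \/
  (exists l1 mid l2 tk Ck tm Cm tk' tm',
      w = l1 ++ (tk, Ck) :: mid ++ (tm, Cm) :: l2 /\
      0 <= tk' <= tk /\ 0 <= tm' <= tm /\
      s = (tk', Ck) :: mid ++ [(tm', Cm)]).

(** Labels +-X, +-Y, +-W_+, +-W_-. The boolean is true for the negated label. *)
Inductive base := BX | BY | BWp | BWm.
Definition label := (bool * base)%type.

Definition base_coeffs (kappa c : R) (b : base) : R * R :=
  match b with
  | BX => (1, 0)
  | BY => (0, 1)
  | BWp => (1 + kappa * c, - (kappa + c))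
  | BWm => (1 - kappa * c, kappa - c)
  end.

Definition label_coeffs (kappa c : R) (l : label) : R * R :=
  let '(neg, b) := l in
  let '(a, bb) := base_coeffs kappa c b in
  if neg then (- a, - bb) else (a, bb).

Definition nu (l : label) : label := (negb (fst l), snd l).
Definition rho (l : label) : label :=
  let '(neg, b) := l in
  match b with
  | BX => (neg, BX)
  | BY => (negb neg, BY)
  | BWp => (neg, BWm)
  | BWm => (neg, BWp)
  end.

Definition sym_group : list (label -> label) :=
  [(fun l => l); nu; rho; (fun l => nu (rho l))].

Definition pattern := list (R * label).

Definition apply_sym (f : label -> label) (p : pattern) : pattern :=
  map (fun x => (fst x, f (snd x))) p.

Definition interp (kappa c : R) (p : pattern) : word :=
  map (fun x => (fst x, label_coeffs kappa c (snd x))) p.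

Definition patternIX (t : R) : pattern := [(PI, (false, BY)); (t, (false, BWp)); (PI, (false, BY))].
Definition patternX (t : R) : pattern := [(PI, (false, BY)); (t, (false, BWp)); (PI, (true, BY))].

From Stdlib Require Import Reals List Lra Nsatz Psatz.
From Coquelicot Require Coquelicot.
Import ListNotations.
Open Scope R_scope.

(* With kappa = 0 rotations about Y are free, so the cost of a decomposition is the total
   angle spent about axes aX + bY weighted by |a|.  Such a factor moves Y through a
   spherical angle of at most tau |a| sin alpha (Y sits at an angle with sine
   |a| sin alpha / |aX + bY| from the axis, and the resulting chord angle is concave in
   the rotation angle), so by the spherical triangle inequality every decomposition of g
   costs at least acos (Y . gY) / sin alpha.  The Euler decomposition
   g = R(aY) R(beta What) R(bY) with respect to the orthonormal pair
   What = (X - cY) / sin alpha, Y has beta = acos (Y . gY), so it attains this bound, and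
   the signs of a and b select the symmetry and the pattern. *)

Definition cross (u v : vec) : vec :=
  mkVec (v2 u * v3 v - v3 u * v2 v) (v3 u * v1 v - v1 u * v3 v) (v1 u * v2 v - v2 u * v1 v).

Definition mv (M : mat) (v : vec) : vec :=
  mkVec (m11 M * v1 v + m12 M * v2 v + m13 M * v3 v)
        (m21 M * v1 v + m22 M * v2 v + m23 M * v3 v)
        (m31 M * v1 v + m32 M * v2 v + m33 M * v3 v).

Definition comb (e1 e2 e3 : vec) (x1 x2 x3 : R) : vec :=
  vadd (vscale x1 e1) (vadd (vscale x2 e2) (vscale x3 e3)).

Definition orthonormal (e1 e2 : vec) : Prop :=
  dot e1 e1 = 1 /\ dot e2 e2 = 1 /\ dot e1 e2 = 0.

Definition proper_isometry (M : mat) : Prop :=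
  (forall p q, dot (mv M p) (mv M q) = dot p q) /\ det M = 1.

Lemma vec_ext (a b : vec) : v1 a = v1 b -> v2 a = v2 b -> v3 a = v3 b -> a = b.
Proof. destruct a, b; simpl; intros; subst; reflexivity. Qed.

Lemma mat_ext (M N : mat) : (forall v, mv M v = mv N v) -> M = N.
Proof.
  intros H.
  pose proof (H (mkVec 1 0 0)) as H1. pose proof (H (mkVec 0 1 0)) as H2.
  pose proof (H (mkVec 0 0 1)) as H3.
  destruct M, N; unfold mv in *; simpl in *.
  injection H1; injection H2; injection H3; intros. f_equal; lra.
Qed.

Lemma mv_mul A B v : mv (mat_mul A B) v = mv A (mv B v).
Proof. apply vec_ext; destruct A, B, v; simpl; ring. Qed.

Lemma mv_id v : mv mat_id v = v.
Proof. apply vec_ext; destruct v; simpl; ring. Qed.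

Lemma mat_mul_id_r M : mat_mul M mat_id = M.
Proof. destruct M; unfold mat_mul; simpl; f_equal; ring. Qed.

Lemma det_mul A B : det (mat_mul A B) = det A * det B.
Proof. destruct A, B; unfold det, mat_mul; simpl; ring. Qed.

Lemma mv_comb M e1 e2 e3 x1 x2 x3 :
  mv M (comb e1 e2 e3 x1 x2 x3) = comb (mv M e1) (mv M e2) (mv M e3) x1 x2 x3.
Proof. apply vec_ext; destruct M, e1, e2, e3; simpl; ring. Qed.

Lemma dot_comm u v : dot u v = dot v u.
Proof. destruct u, v; unfold dot; simpl; ring. Qed.

Lemma dot_scale_l k u v : dot (vscale k u) v = k * dot u v.
Proof. destruct u, v; unfold dot; simpl; ring. Qed.

Lemma dot_scale_r k u v : dot u (vscale k v) = k * dot u v.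
Proof. destruct u, v; unfold dot; simpl; ring. Qed.

Lemma dot_lin X Y a b v : dot (lin X Y a b) v = a * dot X v + b * dot Y v.
Proof. destruct X, Y, v; unfold dot, lin; simpl; ring. Qed.

Lemma dot_comb_r v e1 e2 e3 x1 x2 x3 :
  dot v (comb e1 e2 e3 x1 x2 x3) = x1 * dot v e1 + x2 * dot v e2 + x3 * dot v e3.
Proof. destruct v, e1, e2, e3; unfold dot, comb; simpl; ring. Qed.

Lemma dot_self_ge0 v : 0 <= dot v v.
Proof. destruct v; unfold dot; simpl; nra. Qed.

Lemma dot_self_eq0 v : dot v v = 0 -> v = vzero.
Proof. destruct v; unfold dot, vzero; simpl; intros; f_equal; nra. Qed.

Lemma dot_cross_l u v : dot u (cross u v) = 0.
Proof. destruct u, v; unfold dot, cross; simpl; ring. Qed.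

Lemma dot_cross_r u v : dot v (cross u v) = 0.
Proof. destruct u, v; unfold dot, cross; simpl; ring. Qed.

Lemma dot_cross_cross u v :
  dot (cross u v) (cross u v) = dot u u * dot v v - dot u v * dot u v.
Proof. destruct u, v; unfold dot, cross; simpl; ring. Qed.

Lemma dot_unit_bound u v : dot u u = 1 -> dot v v = 1 -> -1 <= dot u v <= 1.
Proof.
  intros Hu Hv. pose proof (dot_cross_cross u v) as E.
  pose proof (dot_self_ge0 (cross u v)). rewrite Hu, Hv in E. nra.
Qed.

Section Frame.

Variables e1 e2 : vec.
Hypothesis He : orthonormal e1 e2.

Lemma orthonormal_cross :
  dot (cross e1 e2) (cross e1 e2) = 1 /\ dot e1 (cross e1 e2) = 0 /\
  dot e2 (cross e1 e2) = 0.
Proof.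
  destruct He as (H1 & H2 & H12).
  rewrite dot_cross_cross, H1, H2, H12, dot_cross_l, dot_cross_r. split; [ring | auto].
Qed.

Lemma frame_expansion v :
  v = comb e1 e2 (cross e1 e2) (dot e1 v) (dot e2 v) (dot (cross e1 e2) v).
Proof.
  destruct He as (H1 & H2 & H12).
  apply vec_ext; destruct e1 as [a1 a2 a3], e2 as [b1 b2 b3], v as [x y z];
  unfold dot, cross, comb in *; simpl in *; nsatz.
Qed.

Lemma dot_frame_comb x1 x2 x3 y1 y2 y3 :
  dot (comb e1 e2 (cross e1 e2) x1 x2 x3) (comb e1 e2 (cross e1 e2) y1 y2 y3) =
  x1 * y1 + x2 * y2 + x3 * y3.
Proof.
  destruct He as (H1 & H2 & H12). destruct orthonormal_cross as (H3 & H13 & H23).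
  rewrite dot_comb_r, !(dot_comm (comb _ _ _ _ _ _)), !dot_comb_r.
  rewrite (dot_comm e2 e1), (dot_comm (cross _ _) e1), (dot_comm (cross _ _) e2).
  rewrite H1, H2, H3, H12, H13, H23. ring.
Qed.

Lemma rot_unit_frame2 phi x1 x2 x3 :
  mv (rot_unit phi e2) (comb e1 e2 (cross e1 e2) x1 x2 x3) =
  comb e1 e2 (cross e1 e2) (cos phi * x1 + sin phi * x3) x2 (cos phi * x3 - sin phi * x1).
Proof.
  destruct He as (H1 & H2 & H12).
  apply vec_ext; destruct e1 as [a1 a2 a3], e2 as [b1 b2 b3];
  unfold dot, cross, comb, mv, rot_unit in *; simpl in *;
  set (C := cos phi) in *; set (S := sin phi) in *; nsatz.
Qed.

Lemma rot_unit_frame1 phi x1 x2 x3 :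
  mv (rot_unit phi e1) (comb e1 e2 (cross e1 e2) x1 x2 x3) =
  comb e1 e2 (cross e1 e2) x1 (cos phi * x2 - sin phi * x3) (cos phi * x3 + sin phi * x2).
Proof.
  destruct He as (H1 & H2 & H12).
  apply vec_ext; destruct e1 as [a1 a2 a3], e2 as [b1 b2 b3];
  unfold dot, cross, comb, mv, rot_unit in *; simpl in *;
  set (C := cos phi) in *; set (S := sin phi) in *; nsatz.
Qed.

End Frame.

Lemma proper_isometry_id : proper_isometry mat_id.
Proof. split; [intros; rewrite !mv_id; reflexivity | unfold det; simpl; ring]. Qed.

Lemma proper_isometry_mul A B :
  proper_isometry A -> proper_isometry B -> proper_isometry (mat_mul A B).
Proof.
  intros [HA dA] [HB dB]; split.
  - intros; rewrite !mv_mul, HA, HB; reflexivity.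
  - rewrite det_mul, dA, dB; ring.
Qed.

Lemma in_SO3_proper_isometry g : in_SO3 g -> proper_isometry g.
Proof.
  intros [H D]; split; auto. intros p q.
  assert (E : dot (mv g p) (mv g q) = dot p (mv (mat_mul (transp g) g) q)).
  { destruct g, p, q; unfold dot, mv, mat_mul, transp; simpl; ring. }
  rewrite E, H, mv_id; reflexivity.
Qed.

Lemma rot_unit_proper_isometry phi u : dot u u = 1 -> proper_isometry (rot_unit phi u).
Proof.
  intros Hu. pose proof (sin2_cos2 phi) as Hs. unfold Rsqr in Hs.
  destruct u as [x y z]; unfold dot in Hu; simpl in Hu.
  set (C := cos phi) in *. set (S := sin phi) in *.
  split.
  - intros [p1 p2 p3] [q1 q2 q3]. unfold dot, mv, rot_unit; simpl. fold C S. nsatz.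
  - unfold det, rot_unit; simpl. fold C S. nsatz.
Qed.

Lemma proper_isometry_orthonormal M e1 e2 :
  proper_isometry M -> orthonormal e1 e2 -> orthonormal (mv M e1) (mv M e2).
Proof. intros [HM _] (H1 & H2 & H12). unfold orthonormal; rewrite !HM; auto. Qed.

Lemma proper_isometry_cross M a b : proper_isometry M -> orthonormal a b ->
  mv M (cross a b) = cross (mv M a) (mv M b).
Proof.
  intros HM Hab. pose proof (proper_isometry_orthonormal M a b HM Hab) as HMab.
  destruct HM as [HM dM]. destruct (orthonormal_cross a b Hab) as (H3 & H13 & H23).
  rewrite (frame_expansion _ _ HMab (mv M (cross a b))).
  assert (T : dot (cross (mv M a) (mv M b)) (mv M (cross a b)) =
              det M * dot (cross a b) (cross a b)).
  { destruct M, a, b; unfold dot, cross, mv, det; simpl; ring. }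
  rewrite !HM, T, dM, H13, H23, H3.
  apply vec_ext; unfold comb; simpl; ring.
Qed.

Lemma proper_isometry_ext2 M N e1 e2 : proper_isometry M -> proper_isometry N ->
  orthonormal e1 e2 -> mv M e1 = mv N e1 -> mv M e2 = mv N e2 -> M = N.
Proof.
  intros HM HN He E1 E2. apply mat_ext; intros v.
  rewrite (frame_expansion e1 e2 He v), !mv_comb, !proper_isometry_cross by auto.
  rewrite E1, E2; reflexivity.
Qed.

Lemma dot_rot_unit phi u v :
  dot v (mv (rot_unit phi u) v) = cos phi * dot v v + (1 - cos phi) * (dot u v * dot u v).
Proof. destruct u, v; unfold mv, rot_unit, dot; simpl; ring. Qed.

Module SinConcavity.
Import Coquelicot.Coquelicot.

Lemma sin_scale_ge sg y : 0 <= sg <= 1 -> 0 <= y <= PI -> sg * sin y <= sin (sg * y).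
Proof.
  intros Hs Hy. destruct (Req_dec y 0) as [->|Hy0].
  { rewrite Rmult_0_r, sin_0; lra. }
  set (f := fun t => sin (sg * t) - sg * sin t).
  set (f' := fun t => sg * cos (sg * t) - sg * cos t).
  destruct (MVT_cor2 f f' 0 y) as [x [E Hx]]; [lra| |].
  - intros x Hx. apply is_derive_Reals. unfold f, f'. auto_derive; auto. ring.
  - unfold f, f' in E. rewrite Rmult_0_r, sin_0 in E.
    (* f' >= 0 on [0, y] because cos decreases on [0, PI]. *)
    assert (cos x <= cos (sg * x)) by (apply cos_decr_1; nra).
    assert (0 <= (sg * cos (sg * x) - sg * cos x) * (y - 0)) by (apply Rmult_le_pos; nra).
    lra.
Qed.

End SinConcavity.
Import SinConcavity.

Lemma acos_le x th : -1 <= x <= 1 -> 0 <= th <= PI -> cos th <= x -> acos x <= th.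
Proof.
  intros Hx Ht Hc. pose proof (acos_bound x).
  apply cos_decr_0; try lra. rewrite cos_acos; auto.
Qed.

(* Rotating by phi about an axis at angle theta from a unit vector v moves v through
   the spherical angle acos (1 - (1 - cos phi) sin^2 theta); this is at most phi sin theta. *)
Lemma acos_chord_le phi sg : 0 <= phi -> 0 <= sg <= 1 ->
  acos (1 - (1 - cos phi) * (sg * sg)) <= phi * sg.
Proof.
  intros Hp Hs. pose proof PI_RGT_0. pose proof (COS_bound phi).
  assert (Hx : -1 <= 1 - (1 - cos phi) * (sg * sg) <= 1) by nra.
  destruct (Rle_lt_dec PI (phi * sg)).
  { pose proof (acos_bound (1 - (1 - cos phi) * (sg * sg))); lra. }
  apply acos_le; auto; [nra|].
  enough ((1 - cos phi) * (sg * sg) <= 1 - cos (phi * sg)) by lra.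
  assert (Half : forall x, cos (2 * x) = 1 - 2 * (sin x * sin x))
    by (intros; rewrite cos_2a_sin; ring).
  replace (phi * sg) with (2 * (sg * (phi / 2))) by field.
  rewrite Half.
  destruct (Rle_lt_dec phi PI).
  - replace phi with (2 * (phi / 2)) at 1 by field. rewrite Half.
    pose proof (sin_scale_ge sg (phi / 2) Hs ltac:(lra)).
    assert (0 <= sin (phi / 2)) by (apply sin_ge_0; lra).
    assert (0 <= sg * sin (phi / 2)) by nra.
    assert (sg * sin (phi / 2) * (sg * sin (phi / 2)) <=
            sin (sg * (phi / 2)) * sin (sg * (phi / 2))) by (apply Rmult_le_compat; lra).
    nra.
  - (* here 1 - cos phi <= 2 and sg PI/2 <= sg phi/2 < PI/2 *)
    pose proof (sin_scale_ge sg (PI / 2) Hs ltac:(lra)) as Hj. rewrite sin_PI2 in Hj.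
    assert (sin (sg * (PI / 2)) <= sin (sg * (phi / 2))) by (apply sin_incr_1; nra).
    assert (sg * sg <= sin (sg * (phi / 2)) * sin (sg * (phi / 2)))
      by (apply Rmult_le_compat; lra).
    nra.
Qed.

Lemma acos_triangle u v w : dot u u = 1 -> dot v v = 1 -> dot w w = 1 ->
  acos (dot u w) <= acos (dot u v) + acos (dot v w).
Proof.
  intros Hu Hv Hw.
  pose proof (dot_unit_bound u v Hu Hv) as Bx. pose proof (dot_unit_bound v w Hv Hw) as By.
  pose proof (dot_unit_bound u w Hu Hw) as Bz.
  assert (G : (1 - dot u v * dot u v) * (1 - dot v w * dot v w)
              - (dot u w - dot u v * dot v w) * (dot u w - dot u v * dot v w)
              = dot u (cross v w) * dot u (cross v w)).
  { assert (GI : dot u u * dot v v * dot w w + 2 * dot u v * dot v w * dot u w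
       - dot u u * (dot v w * dot v w) - dot v v * (dot u w * dot u w)
       - dot w w * (dot u v * dot u v)
       = dot u (cross v w) * dot u (cross v w)).
    { destruct u, v, w; unfold dot, cross; simpl; ring. }
    rewrite Hu, Hv, Hw in GI. rewrite <- GI. ring. }
  set (x := dot u v) in *. set (y := dot v w) in *. set (z := dot u w) in *.
  pose proof (acos_bound x). pose proof (acos_bound y). pose proof (acos_bound z).
  destruct (Rle_lt_dec PI (acos x + acos y)); [lra|].
  apply acos_le; auto; [lra|].
  rewrite cos_plus, !cos_acos, !sin_acos by auto. unfold Rsqr.
  assert (0 <= 1 - x * x) by nra. assert (0 <= 1 - y * y) by nra.
  set (P := sqrt (1 - x * x) * sqrt (1 - y * y)).
  assert (HP : P * P = (1 - x * x) * (1 - y * y)).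
  { unfold P. replace (sqrt (1 - x * x) * sqrt (1 - y * y) * (sqrt (1 - x * x) * sqrt (1 - y * y)))
     with ((sqrt (1 - x * x) * sqrt (1 - x * x)) * (sqrt (1 - y * y) * sqrt (1 - y * y))) by ring.
    rewrite !sqrt_sqrt; auto. }
  assert (0 <= P) by (unfold P; apply Rmult_le_pos; apply sqrt_pos).
  pose proof (Rle_0_sqr (dot u (cross v w))). unfold Rsqr in *.
  nra.
Qed.

Lemma normalize_unit C : C <> vzero ->
  0 < vnorm C /\ dot (vscale (/ vnorm C) C) (vscale (/ vnorm C) C) = 1.
Proof.
  intros HC. assert (Hp : 0 < dot C C).
  { destruct (dot_self_ge0 C) as [|E]; auto. exfalso; apply HC, dot_self_eq0; auto. }
  unfold vnorm. pose proof (sqrt_lt_R0 _ Hp). split; auto.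
  rewrite dot_scale_l, dot_scale_r.
  rewrite <- (sqrt_sqrt (dot C C)) at 3 by lra. field. lra.
Qed.

Lemma rot_proper_isometry t C : C <> vzero -> proper_isometry (rot t C).
Proof. intros HC. destruct (normalize_unit C HC). apply rot_unit_proper_isometry; auto. Qed.

Lemma rot_scaled_unit t u k : dot u u = 1 -> 0 < k -> rot t (vscale k u) = rot_unit (t * k) u.
Proof.
  intros Hu Hk. unfold rot, vnorm.
  rewrite dot_scale_l, dot_scale_r, Hu, Rmult_1_r, sqrt_square by lra.
  f_equal. apply vec_ext; destruct u; simpl; field; lra.
Qed.

Section LowerBound.

Variables (X Y : vec) (c s : R).
Hypotheses (hX : dot X X = 1) (hY : dot Y Y = 1) (hXY : dot X Y = c)
  (hs : s * s + c * c = 1) (hs0 : 0 < s).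

Lemma dot_lin_self a b : dot (lin X Y a b) (lin X Y a b) = a * a + 2 * a * b * c + b * b.
Proof.
  rewrite dot_lin, !(dot_comm _ (lin X Y a b)), !dot_lin, hX, hY, (dot_comm Y X), hXY. ring.
Qed.

(* The axis aX + bY makes an angle with Y whose sine is |a| s / |aX + bY|. *)
Lemma rot_moves_Y_le t a b : 0 <= t -> lin X Y a b <> vzero ->
  acos (dot Y (mv (rot t (lin X Y a b)) Y)) <= t * Rabs a * s.
Proof.
  intros ht HC. destruct (normalize_unit _ HC) as [Hn Hu].
  set (n := vnorm (lin X Y a b)) in *. set (u := vscale (/ n) (lin X Y a b)) in *.
  assert (Hnn : n * n = a * a + 2 * a * b * c + b * b).
  { unfold n, vnorm. rewrite sqrt_sqrt by apply dot_self_ge0. apply dot_lin_self. }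
  assert (HuY : dot u Y * n = a * c + b).
  { unfold u. rewrite dot_scale_l, dot_lin, hY, hXY. field. lra. }
  set (sg := Rabs a * s / n).
  assert (Ha2 : Rabs a * Rabs a = a * a) by (unfold Rabs; destruct Rcase_abs; ring).
  assert (Hsg2 : sg * sg = 1 - dot u Y * dot u Y).
  { apply Rmult_eq_reg_r with (n * n); [|nra].
    replace (sg * sg * (n * n)) with (Rabs a * Rabs a * (s * s)) by (unfold sg; field; lra).
    replace ((1 - dot u Y * dot u Y) * (n * n)) with (n * n - (dot u Y * n) * (dot u Y * n))
      by ring.
    rewrite Ha2, HuY, Hnn. replace (s * s) with (1 - c * c) by lra. ring. }
  assert (0 <= sg).
  { unfold sg. apply Rmult_le_pos; [apply Rmult_le_pos; [apply Rabs_pos | lra]|].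
    left; apply Rinv_0_lt_compat; lra. }
  unfold rot. fold n u. rewrite dot_rot_unit, hY.
  replace (cos (t * n) * 1 + (1 - cos (t * n)) * (dot u Y * dot u Y))
    with (1 - (1 - cos (t * n)) * (sg * sg)) by (rewrite Hsg2; ring).
  replace (t * Rabs a * s) with (t * n * sg) by (unfold sg; field; lra).
  apply acos_chord_le; [nra|]. split; [lra|]. nra.
Qed.

Definition admissible (w : word) : Prop :=
  forall l, In l w -> 0 <= fst l /\ lin X Y (fst (snd l)) (snd (snd l)) <> vzero.

Lemma eval_word_proper_isometry w : admissible w -> proper_isometry (eval_word X Y w).
Proof.
  induction w as [|l w IH]; intros Hw; simpl.
  - apply proper_isometry_id.
  - apply proper_isometry_mul.
    + apply rot_proper_isometry, (Hw l); simpl; auto.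
    + apply IH; intros l' Hl'; apply Hw; simpl; auto.
Qed.

Lemma eval_word_moves_Y_le w : admissible w ->
  acos (dot Y (mv (eval_word X Y w) Y)) <= s * cost_word 0 w.
Proof.
  induction w as [|[t [a b]] w IH]; intros Hw.
  { simpl. rewrite mv_id, hY, acos_1. lra. }
  assert (Hw' : admissible w) by (intros l Hl; apply Hw; simpl; auto).
  destruct (Hw (t, (a, b))) as [Ht HC]; [simpl; auto|]. simpl in Ht, HC.
  simpl eval_word. simpl cost_word. rewrite mv_mul.
  set (q := mv (eval_word X Y w) Y) in *.
  set (R := rot t (lin X Y a b)).
  destruct (rot_proper_isometry t _ HC) as [HR _]. fold R in HR.
  assert (Hq : dot q q = 1) by (destruct (eval_word_proper_isometry w Hw') as [Hg _];
                                unfold q; rewrite Hg; auto).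
  pose proof (acos_triangle Y (mv R Y) (mv R q) hY ltac:(rewrite HR; auto)
    ltac:(rewrite HR; auto)) as T.
  rewrite HR in T.
  pose proof (rot_moves_Y_le t a b Ht HC) as H. fold R in H. specialize (IH Hw').
  rewrite Rmult_0_l, Rplus_0_r. lra.
Qed.

Lemma optimal_of_cost_le g w : is_decomposition X Y g w ->
  cost_word 0 w <= acos (dot Y (mv g Y)) / s -> optimal 0 X Y g w.
Proof.
  intros Hd Hc. split; auto.
  intros w' [Hw' E]. pose proof (eval_word_moves_Y_le w' Hw') as B.
  rewrite E in B. apply Rle_trans with (1 := Hc).
  apply Rmult_le_reg_r with s; auto. unfold Rdiv. rewrite Rmult_assoc, Rinv_l by lra. lra.
Qed.

End LowerBound.

Lemma comb_e2 e1 e2 e3 : comb e1 e2 e3 0 1 0 = e2.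
Proof. apply vec_ext; unfold comb; simpl; ring. Qed.

Lemma comb_e3 e1 e2 e3 : comb e1 e2 e3 0 0 1 = e3.
Proof. apply vec_ext; unfold comb; simpl; ring. Qed.

Lemma angle_of_unit x y : x * x + y * y = 1 ->
  exists th, -PI <= th <= PI /\ cos th = x /\ sin th = y.
Proof.
  intros H. assert (Hx : -1 <= x <= 1) by nra.
  pose proof (acos_bound x).
  assert (Hs : sin (acos x) = Rabs y).
  { rewrite sin_acos by auto. replace (1 - x²) with (Rsqr y) by (unfold Rsqr; lra).
    apply sqrt_Rsqr_abs. }
  destruct (Rle_lt_dec 0 y).
  - exists (acos x). rewrite cos_acos, Hs, Rabs_right by (auto; lra). repeat split; lra.
  - exists (- acos x). rewrite cos_neg, sin_neg, cos_acos, Hs, Rabs_left by auto.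
    repeat split; lra.
Qed.

Lemma polar_angle x y : exists th, -PI <= th <= PI /\
  sin th * sqrt (x * x + y * y) = x /\ cos th * sqrt (x * x + y * y) = y.
Proof.
  set (r := sqrt (x * x + y * y)).
  assert (Hr : r * r = x * x + y * y) by (apply sqrt_sqrt; nra).
  destruct (Rle_lt_dec r 0) as [Hr0 | Hr0].
  - assert (r = 0) by (pose proof (sqrt_pos (x * x + y * y)); unfold r in *; lra).
    exists 0. rewrite sin_0, cos_0. pose proof PI_RGT_0. repeat split; nra.
  - destruct (angle_of_unit (y / r) (x / r)) as [th [Hth [Hc Hs]]].
    { replace (y / r * (y / r) + x / r * (x / r)) with ((x * x + y * y) / (r * r))
        by (field; lra). rewrite Hr; field; nra. }
    exists th. rewrite Hc, Hs. repeat split; try lra; field; lra.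
Qed.

Lemma euler_decomposition g e1 e2 : proper_isometry g -> orthonormal e1 e2 ->
  exists a b, -PI <= a <= PI /\ -PI <= b <= PI /\
    g = mat_mul (rot_unit a e2)
          (mat_mul (rot_unit (acos (dot e2 (mv g e2))) e1) (rot_unit b e2)).
Proof.
  intros Hg He. pose proof He as (H1 & H2 & H12). pose proof Hg as [Hgd _].
  destruct (orthonormal_cross e1 e2 He) as (H3 & H13 & H23).
  set (p := mv g e2). set (q := mv g (cross e1 e2)).
  set (p1 := dot e1 p). set (p2 := dot e2 p). set (p3 := dot (cross e1 e2) p).
  assert (Hp : p = comb e1 e2 (cross e1 e2) p1 p2 p3) by apply (frame_expansion e1 e2 He).
  assert (Hpp : p1 * p1 + p2 * p2 + p3 * p3 = 1).
  { rewrite <- (dot_frame_comb e1 e2 He), <- Hp. unfold p; rewrite Hgd; auto. }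
  assert (Hp2 : -1 <= p2 <= 1) by nra.
  set (be := acos p2).
  assert (Hsb : sin be = sqrt (p1 * p1 + p3 * p3)).
  { unfold be. rewrite sin_acos by auto. unfold Rsqr. f_equal. lra. }
  destruct (polar_angle p1 p3) as [a [Ha [Hs1 Hc3]]]. rewrite <- Hsb in Hs1, Hc3.
  set (N := mat_mul (rot_unit a e2) (rot_unit be e1)).
  assert (HN : proper_isometry N)
    by (apply proper_isometry_mul; apply rot_unit_proper_isometry; auto).
  assert (HNe2 : mv N e2 = p).
  { unfold N. rewrite mv_mul. rewrite <- (comb_e2 e1 e2 (cross e1 e2)) at 2.
    rewrite rot_unit_frame1, rot_unit_frame2 by auto.
    rewrite Hp. f_equal; [rewrite <- Hs1 | unfold be; rewrite cos_acos by auto | rewrite <- Hc3];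
    ring. }
  set (f1 := mv N e1).
  pose proof (proper_isometry_orthonormal N e1 e2 HN He) as Hf. fold f1 in Hf.
  rewrite HNe2 in Hf.
  assert (HNe3 : mv N (cross e1 e2) = cross f1 p)
    by (unfold f1; rewrite proper_isometry_cross, HNe2 by auto; reflexivity).
  assert (Hq : q = comb f1 p (cross f1 p) (dot f1 q) 0 (dot (cross f1 p) q)).
  { rewrite (frame_expansion f1 p Hf q) at 1. f_equal. unfold p, q. rewrite Hgd; auto. }
  destruct (angle_of_unit (dot (cross f1 p) q) (dot f1 q)) as [b [Hb [Hcb Hsb']]].
  { assert (Hqq : dot q q = 1) by (unfold q; rewrite Hgd; auto).
    rewrite Hq, (dot_frame_comb f1 p Hf) in Hqq. lra. }
  exists a, b. split; auto. split; auto.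
  assert (Hrhs : forall v, mv (mat_mul (rot_unit a e2) (mat_mul (rot_unit be e1) (rot_unit b e2))) v
                          = mv N (mv (rot_unit b e2) v))
    by (intros; unfold N; rewrite !mv_mul; reflexivity).
  apply (proper_isometry_ext2 _ _ e2 (cross e1 e2) Hg).
  { repeat apply proper_isometry_mul; apply rot_unit_proper_isometry; auto. }
  { repeat split; auto. }
  - rewrite Hrhs. rewrite <- (comb_e2 e1 e2 (cross e1 e2)) at 3. rewrite rot_unit_frame2 by auto.
    replace (comb e1 e2 (cross e1 e2) (cos b * 0 + sin b * 0) 1 (cos b * 0 - sin b * 0))
      with (comb e1 e2 (cross e1 e2) 0 1 0) by (f_equal; ring).
    rewrite comb_e2, HNe2. reflexivity.
  - rewrite Hrhs. rewrite <- (comb_e3 e1 e2 (cross e1 e2)) at 2. rewrite rot_unit_frame2 by auto.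
    rewrite mv_comb, HNe2, HNe3. fold q. rewrite Hq at 1.
    fold f1. rewrite Hsb', Hcb. f_equal; ring.
Qed.

Lemma subword_trim_ends {A : Type} (ta t1 t2 tb t3 : R) (x y z : A) :
  0 <= ta <= t1 -> 0 <= tb <= t3 ->
  subword [(ta, x); (t2, y); (tb, z)] [(t1, x); (t2, y); (t3, z)].
Proof.
  intros Ha Hb. right.
  exists nil, ((t2, y) :: nil), nil, t1, x, t3, z, ta, tb. repeat split; lra.
Qed.

Section EulerWords.

Variables (X Y : vec) (c s : R).
Hypotheses (hX : dot X X = 1) (hY : dot Y Y = 1) (hXY : dot X Y = c)
  (hs : s * s + c * c = 1) (hs0 : 0 < s).

Definition axis (l : label) : vec :=
  lin X Y (fst (label_coeffs 0 c l)) (snd (label_coeffs 0 c l)).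

(* For kappa = 0 both W_+ and W_- equal X - cY, whose normalization is What. *)
Definition What : vec := vscale (/ s) (lin X Y 1 (- c)).

Definition Y_label (a : R) : label := (if Rle_dec 0 a then false else true, BY).
Definition W_label (a : R) : label := (false, if Rle_dec 0 a then BWp else BWm).

Lemma orthonormal_What_Y : orthonormal What Y.
Proof.
  unfold What. repeat split; auto.
  - rewrite dot_scale_l, dot_scale_r, (dot_lin_self X Y c) by auto.
    replace (1 * 1 + 2 * 1 * - c * c + - c * - c) with (s * s) by nra. field. lra.
  - rewrite dot_scale_l, dot_lin, hY, hXY. ring.
Qed.

Lemma rot_Y_label a : rot (Rabs a) (axis (Y_label a)) = rot_unit a Y.
Proof.
  unfold axis, Y_label. destruct (Rle_dec 0 a) as [Ha | Ha].
  - replace (lin X Y _ _) with (vscale 1 Y) by (apply vec_ext; destruct X, Y; simpl; ring).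
    rewrite rot_scaled_unit, Rmult_1_r, Rabs_right by lra. reflexivity.
  - replace (lin X Y _ _) with (vscale 1 (vscale (-1) Y))
      by (apply vec_ext; destruct X, Y; simpl; ring).
    rewrite rot_scaled_unit, Rmult_1_r, Rabs_left by (try rewrite dot_scale_l, dot_scale_r, hY; lra).
    destruct Y; unfold rot_unit; simpl. rewrite cos_neg, sin_neg, Ropp_involutive.
    f_equal; ring.
Qed.

Lemma rot_W_label a t : rot t (axis (W_label a)) = rot_unit (t * s) What.
Proof.
  destruct orthonormal_What_Y as [HW _]. unfold What in HW |- *.
  rewrite <- rot_scaled_unit by auto. f_equal.
  unfold axis, W_label; destruct (Rle_dec 0 a); apply vec_ext; destruct X, Y; simpl; field; lra.
Qed.

Lemma axis_Y_label_neq0 a : axis (Y_label a) <> vzero.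
Proof.
  intros E. assert (H : dot (axis (Y_label a)) (axis (Y_label a)) = 1).
  { unfold axis, Y_label; destruct (Rle_dec 0 a); simpl; rewrite (dot_lin_self X Y c) by auto; ring. }
  rewrite E in H. unfold dot in H; simpl in H. lra.
Qed.

Lemma axis_W_label_neq0 a : axis (W_label a) <> vzero.
Proof.
  intros E. assert (H : dot (axis (W_label a)) (axis (W_label a)) = s * s).
  { unfold axis, W_label; destruct (Rle_dec 0 a); simpl; rewrite (dot_lin_self X Y c) by auto; nra. }
  rewrite E in H. unfold dot in H; simpl in H. nra.
Qed.

Definition euler_word (a t b : R) : word :=
  interp 0 c [(Rabs a, Y_label a); (t, W_label a); (Rabs b, Y_label b)].

Lemma admissible_euler_word a t b : 0 <= t -> admissible X Y (euler_word a t b).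
Proof.
  intros Ht l Hl. simpl in Hl.
  destruct Hl as [<- | [<- | [<- | []]]]; split; try apply Rabs_pos; try exact Ht;
    [apply axis_Y_label_neq0 | apply axis_W_label_neq0 | apply axis_Y_label_neq0].
Qed.

Lemma eval_euler_word a t b : eval_word X Y (euler_word a t b) =
  mat_mul (rot_unit a Y) (mat_mul (rot_unit (t * s) What) (rot_unit b Y)).
Proof.
  unfold euler_word, interp, eval_word; cbn [map fold_right fst snd].
  rewrite mat_mul_id_r. fold (axis (Y_label a)) (axis (W_label a)) (axis (Y_label b)).
  rewrite !rot_Y_label, rot_W_label. reflexivity.
Qed.

Lemma cost_euler_word a t b : cost_word 0 (euler_word a t b) = t.
Proof.
  unfold euler_word, Y_label, W_label.
  destruct (Rle_dec 0 a), (Rle_dec 0 b); simpl;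
    rewrite ?Ropp_0, ?Rabs_R0, ?Rmult_0_l, ?Rplus_0_r, ?Rminus_0_r, ?Rabs_R1; ring.
Qed.

Lemma euler_word_subword_pattern a t b : -PI <= a <= PI -> -PI <= b <= PI ->
  exists (sigma : label -> label) (P : R -> pattern),
    In sigma sym_group /\ In P [patternIX; patternX] /\
    subword (euler_word a t b) (interp 0 c (apply_sym sigma (P t))).
Proof.
  intros Ha Hb.
  assert (Hpat : exists (sigma : label -> label) (P : R -> pattern),
    In sigma sym_group /\ In P [patternIX; patternX] /\
    apply_sym sigma (P t) = [(PI, Y_label a); (t, W_label a); (PI, Y_label b)]).
  { unfold Y_label, W_label.
    destruct (Rle_dec 0 a), (Rle_dec 0 b);
      [exists (fun l => l), patternIX | exists (fun l => l), patternX
      | exists rho, patternX | exists rho, patternIX];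
      simpl; auto 6. }
  destruct Hpat as (sigma & P & Hs & HP & E). exists sigma, P.
  repeat split; auto. rewrite E. unfold euler_word, interp; cbn [map fst snd].
  apply subword_trim_ends; split; auto using Rabs_pos, Rabs_le.
Qed.

End EulerWords.

Theorem theorem2p4 (X Y : vec) (alpha : R)
  (hX : dot X X = 1) (hY : dot Y Y = 1)
  (halpha : 0 < alpha <= PI / 2) (hangle : dot X Y = cos alpha)
  (g : mat) (hg : in_SO3 g) :
  exists w : word,
    optimal 0 X Y g w /\
    exists (t : R) (sigma : label -> label) (P : R -> pattern),
      0 <= t /\ In sigma sym_group /\ In P [patternIX; patternX] /\
      subword w (interp 0 (cos alpha) (apply_sym sigma (P t))).
Proof.
  set (c := cos alpha) in *. set (s := sin alpha).
  assert (hs : s * s + c * c = 1) by (pose proof (sin2_cos2 alpha); unfold Rsqr in *; auto).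
  assert (hs0 : 0 < s) by (apply sin_gt_0; pose proof PI_RGT_0; lra).
  destruct (euler_decomposition g _ _ (in_SO3_proper_isometry g hg)
              (orthonormal_What_Y X Y c s hX hY hangle hs hs0)) as (a & b & Ha & Hb & Eg).
  set (be := acos (dot Y (mv g Y))) in *.
  set (t := be / s).
  assert (Ht : 0 <= t)
    by (unfold t, Rdiv; apply Rmult_le_pos; [apply acos_bound | left; apply Rinv_0_lt_compat; lra]).
  exists (euler_word c a t b). split.
  - apply (optimal_of_cost_le X Y c s); auto.
    + split; [apply (admissible_euler_word X Y c s); auto|].
      rewrite (eval_euler_word X Y c s) by auto.
      replace (t * s) with be by (unfold t; field; lra). auto.
    + rewrite cost_euler_word. unfold t, be. lra.
  - destruct (euler_word_subword_pattern c a t b Ha Hb) as (sigma & P & HS & HP & Hsub).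
    exists t, sigma, P. auto.
Qed.
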